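(* Let $\mathcal X_1,\dots,\mathcal X_n$ be discrete (finite or countable) alphabets. For each $i=1,\dots,n$ let $\{p^{(i)}_{\lambda_i}(\cdot\,|\,x_1,\dots,x_{i-1})\}_{\lambda_i\in\Lambda_i}$ be a nonempty family of conditional probability distributions on $\mathcal X_i$ given $(x_1,\dots,x_{i-1})\in\mathcal X_1\times\cdots\times\mathcal X_{i-1}$ (for $i=1$ these are just probability distributions on $\mathcal X_1$). Then $$\hat H(X_1,\dots,X_n)\le\sum_{i=1}^n \hat H(X_i|X_{i-1},\dots,X_1).$$
   Context: Convention: $0\log\frac10=0$; values in $[0,\infty]$. For $H(q)=\sum_u q(u)\log\frac1{q(u)}$ the Shannon entropy of a distribution $q$. For $(\lambda_1,\dots,\lambda_k)\in\Lambda_1\times\cdots\times\Lambda_k$ let $p_{\lambda_1,\dots,\lambda_k}(x_1,\dots,x_k)=\prod_{i=1}^k p^{(i)}_{\lambda_i}(x_i|x_1,\dots,x_{i-1})$. Define the nonlinear joint entropy $\hat H(X_1,\dots,X_n)=\sup_{\lambda_1,\dots,\lambda_n}H(p_{\lambda_1,\dots,\lambda_n})$ and the nonlinear conditional entropy $\hat H(X_i|X_{i-1},\dots,X_1)=\sup_{\lambda_1,\dots,\lambda_{i-1}}\sum_{x_1,\dots,x_{i-1}}p_{\lambda_1,\dots,\lambda_{i-1}}(x_1,\dots,x_{i-1})\,\sup_{\lambda_i\in\Lambda_i}H\big(p^{(i)}_{\lambda_i}(\cdot|x_1,\dots,x_{i-1})\big)$, with $\hat H(X_1|\,\cdot\,)=\sup_{\lambda_1}H(p^{(1)}_{\lambda_1})$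 for $i=1$. (These extend the two-variable definitions $\hat H(X,Y)=\sup_\theta\sup_\lambda H(p_\theta p_\lambda)$ and $\hat H(Y|X)=\sup_\theta\sum_x p_\theta(x)\sup_\lambda H(p_\lambda(\cdot|x))$.) *)

From HB Require Import structures.
From mathcomp Require Import all_boot all_order all_algebra.
From mathcomp Require Import all_classical all_reals all_analysis.
Set Implicit Arguments. Unset Strict Implicit. Unset Printing Implicit Defensive.
Import Order.TTheory GRing.Theory Num.Theory.
Local Open Scope classical_set_scope.
Local Open Scope ring_scope.

(* Histories (x_0, ..., x_{m-1}) with x_j in the alphabet X j. *)
Definition hist (X : nat -> countType) (m : nat) := {dffun forall j : 'I_m, X j}.

Definition restr (X : nat -> countType) (m : nat) (x : hist X m) (i : 'I_m)
  : hist X i :=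
  [ffun k : 'I_i => x (widen_ord (ltnW (ltn_ord i)) k)].

Definition entropy (R : realType) (T : choiceType) (q : T -> R) : \bar R :=
  esum [set: T] (fun u => (if q u == 0 then 0 else q u * ln (q u)^-1)%:E).

Definition joint (R : realType) (X : nat -> countType) (L : nat -> Type)
  (p : forall i : nat, L i -> hist X i -> X i -> R)
  (m : nat) (lam : forall j : 'I_m, L j) (x : hist X m) : R :=
  \prod_(j < m) p j (lam j) (restr x j) (x j).

Definition Hhat_joint (R : realType) (X : nat -> countType) (L : nat -> Type)
  (p : forall i : nat, L i -> hist X i -> X i -> R) (n : nat) : \bar R :=
  ereal_sup [set entropy (joint p lam) | lam in [set: forall j : 'I_n, L j]].

Definition Hhat_cond (R : realType) (X : nat -> countType) (L : nat -> Type)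
  (p : forall i : nat, L i -> hist X i -> X i -> R) (i : nat) : \bar R :=
  ereal_sup [set esum [set: hist X i]
                 (fun x => (joint p lam x)%:E *
                    ereal_sup [set entropy (p i l x) | l in [set: L i]])%E
            | lam in [set: forall j : 'I_i, L j]].

Definition is_distr (R : realType) (T : choiceType) (q : T -> R) : Prop :=
  (forall u, 0 <= q u) /\ esum [set: T] (fun u => (q u)%:E) = 1%E.

From HB Require Import structures.
From mathcomp Require Import all_boot all_order all_algebra.
From mathcomp Require Import all_classical all_reals all_analysis.
From mathcomp Require Import ring.
Import Order.TTheory GRing.Theory Num.Theory.
Local Open Scope classical_set_scope.
Local Open Scope ring_scope.

(* For fixed parameters [lam], splitting off the last coordinate of a history
   gives the chain-rule bound
     H(p_{lam_0..lam_m}) <= H(p_{lam_0..lam_{m-1}})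
                            + sum_h p_{lam_0..lam_{m-1}}(h) H(p^(m)_{lam_m}(.|h)),
   since eta(ab) = b eta(a) + a eta(b) for eta(v) = v ln(1/v) and each
   conditional distribution has total mass one.  The last sum is at most
   Hhat(X_m | X_{m-1}, ..., X_0), so by induction on m the entropy of every
   joint distribution is bounded by the sum of the nonlinear conditional
   entropies, and so is their supremum.  Everything is computed in [0, +oo],
   so no summability assumption is needed. *)

Section entropy_term.
Context {R : realType}.

Definition entropy_term (v : R) : R := if v == 0 then 0 else v * ln v^-1.

Lemma entropyE (T : choiceType) (q : T -> R) :
  entropy q = (\esum_(u in [set: T]) (entropy_term (q u))%:E)%E.
Proof. by []. Qed.

Lemma entropy_term_ge0 v : 0 <= v <= 1 -> 0 <= entropy_term v.
Proof.
case/andP=> v0 v1; rewrite /entropy_term; case: eqP => // /eqP vn0.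
have vp : 0 < v by rewrite lt0r vn0.
by rewrite mulr_ge0 // ln_ge0 // invf_ge1.
Qed.

Lemma entropy_termM a b : 0 <= a -> 0 <= b ->
  entropy_term (a * b) = b * entropy_term a + a * entropy_term b.
Proof.
move=> a0 b0; rewrite /entropy_term.
have [->|an] := eqVneq a 0; first by rewrite !mul0r eqxx mulr0 addr0.
have [->|bn] := eqVneq b 0; first by rewrite !mulr0 eqxx mul0r addr0.
rewrite mulf_eq0 (negPf an) (negPf bn) /=.
have ap : 0 < a by rewrite lt0r an.
have bp : 0 < b by rewrite lt0r bn.
rewrite invfM lnM ?posrE ?invr_gt0 //; ring.
Qed.

End entropy_term.

Section esum_nonneg.
Context {R : realType} {T : choiceType}.
Local Open Scope ereal_scope.

Lemma ge0_esumZl (S : set T) (r : R) (a : T -> \bar R) :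
  (0 <= r)%R -> (forall i, 0 <= a i) ->
  \esum_(i in S) (r%:E * a i) = r%:E * \esum_(i in S) a i.
Proof.
move=> r0 a0; rewrite /esum -ereal_supZl //; last first.
  by apply/set0P; exists 0; exists set0; [exact: fsets_set0|rewrite fsbig_set0].
congr ereal_sup; apply/seteqP; split=> x /=.
  by case=> A HA <-; exists (\sum_(i \in A) a i); [exists A|rewrite ge0_mule_fsumr].
by case=> y [A HA <-] <-; exists A => //; rewrite ge0_mule_fsumr.
Qed.

Lemma ge0_subset_esum (A B : set T) (a : T -> \bar R) :
  A `<=` B -> (forall i, 0 <= a i) -> \esum_(i in A) a i <= \esum_(i in B) a i.
Proof.
move=> AB a0; rewrite esum_mkcond [leRHS]esum_mkcond; apply: le_esum => i _.
case: ifPn => iA; last by case: ifPn.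
by rewrite ifT // inE; apply: AB; rewrite -inE.
Qed.

End esum_nonneg.

Section distribution.
Context {R : realType} {T : choiceType} {q : T -> R}.
Hypothesis q_distr : is_distr q.

Lemma is_distr_ge0_le1 u : 0 <= q u <= 1.
Proof.
have [q0 q1] := q_distr; rewrite q0 -lee_fin -q1 /=.
apply: esum_ge; exists [set u]; first by split; [exact: finite_set1|].
by rewrite fsbig_set1.
Qed.

Lemma entropy_ge0 : (0 <= entropy q)%E.
Proof.
by apply: esum_ge0 => u _; rewrite lee_fin entropy_term_ge0 ?is_distr_ge0_le1.
Qed.

Lemma esum_entropy_termZ a : 0 <= a <= 1 ->
  (\esum_(u in [set: T]) (entropy_term (a * q u))%:E
   = (entropy_term a)%:E + a%:E * entropy q)%E.
Proof.
move=> a01; have /andP[a0 _] := a01; have [q0 q1] := q_distr.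
have ea : 0 <= entropy_term a by exact: entropy_term_ge0.
under eq_esum => u _ do rewrite entropy_termM // EFinD EFinM [X in (_ + X)%E]EFinM.
rewrite esumD; last 2 first.
- by move=> u _; rewrite mule_ge0 // lee_fin.
- by move=> u _; rewrite mule_ge0 // lee_fin // entropy_term_ge0 ?is_distr_ge0_le1.
under eq_esum => u _ do rewrite muleC.
rewrite ge0_esumZl // q1 mule1 ge0_esumZl // => u.
by rewrite lee_fin entropy_term_ge0 ?is_distr_ge0_le1.
Qed.

End distribution.

Section history.
Context {X : nat -> countType}.

Lemma hist_ord_irr {m} (x : hist X m) k (km km' : (k < m)%N) :
  x (Ordinal km) = x (Ordinal km').
Proof. by rewrite (bool_irrelevance km km'). Qed.

Lemma restr_restr m (x : hist X m.+1) (j : 'I_m) :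
  restr (restr x ord_max) j = restr x (widen_ord (leqnSn m) j).
Proof. by apply/ffunP => k; rewrite !ffunE; apply: hist_ord_irr. Qed.

Definition split_last {m} (x : hist X m.+1) : hist X m * X m :=
  (restr x ord_max, x ord_max).

Lemma split_last_inj m : injective (@split_last m).
Proof.
move=> x x' [e1 e2]; apply/ffunP => -[k km].
have [k_lt_m|k_gt_m|k_eq_m] := ltngtP k m.
- have := congr1 (fun h : hist X m => h (Ordinal k_lt_m)) e1; rewrite /= !ffunE.
  by rewrite (hist_ord_irr x _ _ km) (hist_ord_irr x' _ _ km).
- by have := km; rewrite ltnS leqNgt k_gt_m.
- subst k; move: e2; rewrite /ord_max.
  by rewrite (hist_ord_irr x _ _ km) (hist_ord_irr x' _ _ km).
Qed.

End history.

Section chain_rule.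
Context {R : realType} {X : nat -> countType} {L : nat -> Type}
  {p : forall i : nat, L i -> hist X i -> X i -> R} {n : nat}.
Hypothesis p_distr :
  forall (i : nat) (l : L i) (h : hist X i), (i < n)%N -> is_distr (p i l h).

Definition restr_lam {m} (lam : forall j : 'I_m.+1, L j) : forall j : 'I_m, L j :=
  fun j => lam (widen_ord (leqnSn m) j).

Lemma joint_recr m (lam : forall j : 'I_m.+1, L j) (x : hist X m.+1) :
  joint p lam x = joint p (restr_lam lam) (restr x ord_max) *
                  p m (lam ord_max) (restr x ord_max) (x ord_max).
Proof.
rewrite /joint big_ord_recr /=; congr (_ * _); apply: eq_bigr => j _.
rewrite restr_restr [in RHS]ffunE /restr_lam.
by congr (p _ _ _ _); apply: hist_ord_irr.
Qed.

Lemma joint_ge0_le1 {m} (lam : forall j : 'I_m, L j) (h : hist X m) :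
  (m <= n)%N -> 0 <= joint p lam h <= 1.
Proof.
move=> mn; have p01 (j : 'I_m) := is_distr_ge0_le1
  (p_distr _ (lam j) (restr h j) (leq_trans (ltn_ord j) mn)) (h j).
by rewrite prodr_ge0 ?prodr_ile1 // => j _; have /andP[] := p01 j.
Qed.

Local Open Scope ereal_scope.

Lemma entropy_joint_recr_le {m} (mn : (m < n)%N) (lam : forall j : 'I_m.+1, L j) :
  entropy (joint p lam) <= entropy (joint p (restr_lam lam)) +
    \esum_(h in [set: hist X m])
       (joint p (restr_lam lam) h)%:E * entropy (p m (lam ord_max) h).
Proof.
set J := joint p (restr_lam lam); set q := p m (lam ord_max).
have J01 h : (0 <= J h <= 1)%R by exact: joint_ge0_le1 (ltnW mn).
have q01 h y : (0 <= q h y <= 1)%R := is_distr_ge0_le1 (p_distr m _ h mn) y.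
pose G (z : hist X m * X m) := (entropy_term (J z.1 * q z.1 z.2))%:E.
have G0 z : 0 <= G z.
  have /andP[J0 J1] := J01 z.1; have /andP[q0 q1] := q01 z.1 z.2.
  by rewrite lee_fin entropy_term_ge0 // mulr_ge0 //= mulr_ile1.
have -> : entropy (joint p lam) = \esum_(x in [set: hist X m.+1]) G (split_last x).
  by rewrite entropyE; apply: eq_esum => x _; rewrite joint_recr.
(* [split_last] is even bijective, but injectivity suffices for the bound. *)
rewrite -(esum_image _ _ G); last by move=> x y _ _; apply: split_last_inj.
apply: le_trans (ge0_subset_esum _ _ _ (subsetT _) G0) _.
have -> : [set: hist X m * X m] = [set: hist X m] `*`` (fun=> [set: X m]).
  by apply/seteqP; split.
rewrite -(esum_esum (a := fun h y => G (h, y))) => [|*]; last exact: G0.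
rewrite /G /=.
rewrite (eq_esum (b := fun h => (entropy_term (J h))%:E + (J h)%:E * entropy (q h)));
  last by move=> h _; exact: esum_entropy_termZ (p_distr m _ h mn) _ (J01 h).
rewrite esumD; [by rewrite entropyE|move=> h _..].
- by rewrite lee_fin entropy_term_ge0.
- have /andP[J0 _] := J01 h.
  by rewrite mule_ge0 ?lee_fin // (entropy_ge0 (p_distr m _ h mn)).
Qed.

Lemma esum_joint_entropy_le_Hhat_cond {m} (lam : forall j : 'I_m, L j) (l : L m) :
  (m <= n)%N ->
  \esum_(h in [set: hist X m]) (joint p lam h)%:E * entropy (p m l h)
  <= Hhat_cond p m.
Proof.
move=> mn; apply: le_trans (ereal_sup_ubound _) => /=; last by exists lam.
apply: le_esum => h _; apply: lee_wpmul2l.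
  by rewrite lee_fin; case/andP: (joint_ge0_le1 lam h mn).
by apply: ereal_sup_ubound; exists l.
Qed.

Lemma entropy_joint_le_sum_cond {m} (lam : forall j : 'I_m, L j) : (m <= n)%N ->
  entropy (joint p lam) <= \sum_(i < m) Hhat_cond p i.
Proof.
elim: m lam => [|m IH] lam mn.
  rewrite big_ord0 entropyE esum1 // => x _.
  by rewrite /joint big_ord0 /entropy_term oner_eq0 invr1 ln1 mulr0.
rewrite big_ord_recr /=; apply: le_trans (entropy_joint_recr_le mn lam) _.
by apply: leeD; [exact/IH/ltnW | exact/esum_joint_entropy_le_Hhat_cond/ltnW].
Qed.

End chain_rule.

Theorem theorem6 (R : realType) (X : nat -> countType) (L : nat -> Type)
  (p : forall i : nat, L i -> hist X i -> X i -> R) (n : nat)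
  (hL : forall i : nat, (i < n)%N -> inhabited (L i))
  (hp : forall (i : nat) (l : L i) (h : hist X i), (i < n)%N -> is_distr (p i l h)) :
  (Hhat_joint p n <= \sum_(i < n) Hhat_cond p i)%E.
Proof.
apply: ge_ereal_sup => _ [lam _ <-].
exact (entropy_joint_le_sum_cond hp lam (leqnn n)).
Qed.
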